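(* Let $n \geq 1$, let $\mathbb{K}$ be a field and $S=\mathbb{K}[x_1,\dots,x_n]$. Let $M_n^{(1)} \subset S$ be the ideal \[M_n^{(1)}=\langle x_i^{\,n} : 1\le i\le n\rangle+\langle x_i^{\,n-1}x_j^{\,n-1} : 1\le i<j\le n\rangle .\] Then the number of standard monomials of $M_n^{(1)}$ (monomials of $S$ divisible by no generator), equivalently $\dim_{\mathbb{K}} S/M_n^{(1)}$, equals \[(2n-1)(n-1)^{n-1}\] (with the convention $0^0=1$).
   Context: The ideal $M_n^{(1)}$ is the $1$-skeleton ideal of the complete graph $K_{n+1}$ on vertex set $\{0,1,\dots,n\}$ with sink $0$: for a graph $G$ on $\{0,1,\dots,n\}$ and nonempty $\sigma\subseteq[n]=\{1,\dots,n\}$ one sets $m_\sigma=\prod_{i\in\sigma}x_i^{\mathrm{outdeg}_\sigma(i)}$, where $\mathrm{outdeg}_\sigma(i)$ is the number of vertices of $G$ not in $\sigma$ adjacent to $i$, and $M_G^{(1)}=\langle m_\sigma : \emptyset\ne\sigma\subseteq[n],\ |\sigma|\le 2\rangle$. For $G=K_{n+1}$ this gives the generators displayed in the claim. *)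

(* Monomials of K[x_1..x_n] are represented by exponent
   vectors e : {ffun 'I_n -> nat} (variable x_(i+1) <-> index i : 'I_n). *)
From mathcomp Require Import all_boot.
Set Implicit Arguments. Unset Strict Implicit. Unset Printing Implicit Defensive.

Definition monomial (n : nat) := {ffun 'I_n -> nat}.

Definition mdivides n (a b : monomial n) : bool := [forall i, a i <= b i].

Definition pure_power n (i : 'I_n) : monomial n :=
  [ffun k => if k == i then n else 0].

Definition pair_power n (i j : 'I_n) : monomial n :=
  [ffun k => if (k == i) || (k == j) then n.-1 else 0].

Definition M1_gens n : seq (monomial n) :=
  [seq pure_power i | i : 'I_n <- enum 'I_n] ++
  [seq pair_power i j | i : 'I_n <- enum 'I_n, j : 'I_n <- filter (fun j : 'I_n => (i < j)%N) (enum 'I_n)].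

Definition standard_M1 n (e : monomial n) : bool :=
  ~~ has (fun g => mdivides g e) (M1_gens n).

From mathcomp Require Import all_boot zify.
Set Implicit Arguments. Unset Strict Implicit. Unset Printing Implicit Defensive.

(* A monomial is divisible by no x_i^n iff all its exponents are at most n-1;
   it is then divisible by no x_i^(n-1) x_j^(n-1) iff at most one exponent
   equals n-1.  Among exponent vectors in {0..n-1}^n, (n-1)^n have no exponent
   n-1 and n (n-1)^(n-1) have exactly one, which sums to (2n-1)(n-1)^(n-1). *)

Lemma card_family_prod (aT rT : finType) (F : aT -> pred rT) :
  #|family F| = \prod_x #|F x|.
Proof. by rewrite card_family foldrE big_map /index_enum enumT. Qed.

Lemma eq_ord_max_leq d (x : 'I_d.+1) : (x == ord_max) = (d <= x).
Proof. by rewrite -(inj_eq val_inj) eqn_leq -ltnS ltn_ord. Qed.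

Lemma forall_ltn_nandE m (P : pred 'I_m) :
  [forall i : 'I_m, forall j : 'I_m, (i < j) ==> ~~ (P i && P j)] =
  [forall i, forall j, P i ==> P j ==> (i == j)].
Proof.
apply/forallP/forallP => H i; apply/forallP => j.
  apply/implyP => Pi; apply/implyP => Pj; case: (ltngtP i j) => [lt|lt|/val_inj ->] //.
  - by move/forallP: (H i) => /(_ j); rewrite lt Pi Pj.
  - by move/forallP: (H j) => /(_ i); rewrite lt Pi Pj.
apply/implyP => lt; apply/negP => /andP [Pi Pj].
by move/forallP: (H i) => /(_ j); rewrite Pi Pj => /eqP eq_ij; rewrite eq_ij ltnn in lt.
Qed.

Section AtMostOneTop.
Variables (T : finType) (d : nat).
Local Notation top := (@ord_max d).

Definition at_most_one_top (f : {ffun T -> 'I_d.+1}) : bool :=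
  [forall i, forall j, (f i == top) ==> (f j == top) ==> (i == j)].

Definition top_index (f : {ffun T -> 'I_d.+1}) : option T := [pick i | f i == top].

Definition top_exactly_at (k : option T) (j : T) : pred 'I_d.+1 :=
  [pred x | (x == top) == (Some j == k)].

Lemma at_most_one_top_indexE f k :
  at_most_one_top f && (top_index f == k) = (f \in family (top_exactly_at k)).
Proof.
rewrite /top_index; apply/andP/familyP => /= [[/forallP amo /eqP <-] j|fam].
  case: pickP => [x fx|notop]; last by rewrite inE notop.
  apply/eqP; apply/idP/eqP => [fj|[->] //].
  by congr Some; apply/eqP; move/forallP: (amo j) => /(_ x); rewrite fj fx.
have famE j : (f j == top) = (Some j == k) := eqP (fam j).
split.
  apply/forallP => i; apply/forallP => j.
  by rewrite !famE; apply/implyP => /eqP <-; apply/implyP => /eqP [->].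
case: pickP => [x|notop]; first by rewrite famE.
by case: k {fam} famE => // i /(_ i); rewrite notop eqxx.
Qed.

Lemma card_top_exactly_at k j : #|top_exactly_at k j| = if Some j == k then 1 else d.
Proof.
rewrite /top_exactly_at; case: (Some j == k).
  by rewrite -(card1 top); apply: eq_card => x; rewrite !inE eqb_id.
transitivity #|predC1 top|; last by rewrite cardC1 card_ord.
by apply: eq_card => x; rewrite !inE eqbF_neg.
Qed.

Lemma card_at_most_one_top :
  #|at_most_one_top| = d ^ #|T| + #|T| * d ^ #|T|.-1.
Proof.
have fiberE k : \sum_(f | at_most_one_top f && (top_index f == k)) 1
                = \prod_j (if Some j == k then 1 else d).
  rewrite sum1_card (eq_card (at_most_one_top_indexE^~ k)) card_family_prod.
  by apply: eq_bigr => j _; rewrite card_top_exactly_at.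
rewrite -sum1_card (partition_big top_index predT) //= (bigD1 None) //=.
rewrite (reindex_omap Some id) //=; last by case.
rewrite fiberE (eq_bigr (fun _ => d)) ?prod_nat_const //.
congr (_ + _); rewrite (eq_bigl predT) => [|i]; last by rewrite eqxx.
rewrite (eq_bigr (fun _ => d ^ #|T|.-1)) ?sum_nat_const // => i _.
rewrite fiberE (bigD1 i) //= eqxx mul1n.
rewrite (eq_bigr (fun _ => d)) => [|j /negPf ji]; last by rewrite (inj_eq Some_inj) ji.
by rewrite prod_nat_const cardC1.
Qed.

End AtMostOneTop.

Lemma mdivides_pure_power n (i : 'I_n) (e : monomial n) :
  mdivides (pure_power i) e = (n <= e i).
Proof.
apply/forallP/idP => [/(_ i)|le_n k]; first by rewrite ffunE eqxx.
by rewrite ffunE; case: eqP => [->|].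
Qed.

Lemma mdivides_pair_power n (i j : 'I_n) (e : monomial n) :
  mdivides (pair_power i j) e = (n.-1 <= e i) && (n.-1 <= e j).
Proof.
apply/forallP/andP => [H|[le_i le_j] k].
  by move: (H i) (H j); rewrite !ffunE !eqxx orbT.
by rewrite ffunE; case: eqP => [->|] //= _; case: eqP => [->|].
Qed.

Lemma standard_M1E n (e : monomial n) :
  standard_M1 e = [forall i, e i < n] &&
    [forall i, forall j, (n.-1 <= e i) ==> (n.-1 <= e j) ==> (i == j)].
Proof.
rewrite /standard_M1 /M1_gens has_cat negb_or has_map -forall_ltn_nandE.
congr andb; apply/hasPn/forallP => [H i|H].
- by move: (H i (mem_enum _ i)); rewrite /= mdivides_pure_power ltnNge.
- by move=> i _; rewrite /= mdivides_pure_power -ltnNge.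
- apply/forallP => j; apply/implyP => lt_ij; rewrite -mdivides_pair_power.
  by apply: H; apply/allpairsPdep; exists i, j; rewrite mem_enum mem_filter mem_enum lt_ij.
- move=> _ /allpairsPdep [i [j [_ + ->]]]; rewrite mem_filter => /andP [lt_ij _].
  by rewrite mdivides_pair_power; move/forallP: (H i) => /(_ j); rewrite lt_ij.
Qed.

Definition monomial_of n m (f : {ffun 'I_n -> 'I_m}) : monomial n :=
  [ffun i => val (f i)].

Lemma monomial_of_inj n m : injective (@monomial_of n m).
Proof.
move=> f g /ffunP eq_fg; apply/ffunP => i; apply: val_inj.
by move: (eq_fg i); rewrite !ffunE.
Qed.

Lemma standard_monomial_of d (f : {ffun 'I_d.+1 -> 'I_d.+1}) :
  standard_M1 (monomial_of f) = at_most_one_top f.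
Proof.
have lt_f : [forall i, monomial_of f i < d.+1] by apply/forallP => i; rewrite ffunE ltn_ord.
rewrite standard_M1E lt_f.
by apply: eq_forallb => i; apply: eq_forallb => j; rewrite !ffunE !eq_ord_max_leq.
Qed.

Lemma mem_standard_monomials d (e : monomial d.+1) :
  (e \in [seq monomial_of f | f <- enum (@at_most_one_top 'I_d.+1 d)]) =
  standard_M1 e.
Proof.
apply/mapP/idP => [[f + ->]|std_e]; first by rewrite mem_enum standard_monomial_of.
have := std_e; rewrite standard_M1E => /andP [/forallP lt_e _].
have e_of : e = monomial_of [ffun i => inord (e i) : 'I_d.+1].
  by apply/ffunP => i; rewrite !ffunE /= inordK.
rewrite e_of standard_monomial_of in std_e.
by exists [ffun i => inord (e i)]; rewrite ?mem_enum.
Qed.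

Theorem theorem3p2 (n : nat) (hn : 1 <= n) :
  exists s : seq (monomial n),
    [/\ uniq s,
        (forall e : monomial n, (e \in s) = standard_M1 e)
      & size s = (2 * n - 1) * (n - 1) ^ (n - 1)].
Proof.
case: n hn => // d _.
exists [seq monomial_of f | f <- enum (@at_most_one_top 'I_d.+1 d)]; split.
- by rewrite map_inj_uniq ?enum_uniq //; apply: monomial_of_inj.
- exact: mem_standard_monomials.
- rewrite size_map -cardE card_at_most_one_top card_ord subSS subn0 expnS -mulnDl.
  by congr (_ * _); lia.
Qed.
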